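(* Assume (A1), $t>0$ and $x\in\mathrm{dom}\,J+t\,\mathrm{int}\,\mathrm{dom}\,H^*$. Then there exist unique $\bar u,\bar p\in\mathbb{R}^n$ with $$\bar u=\operatorname*{argmin}_{u\in\mathbb{R}^n}\Big\{tH^*\Big(\frac{x-u}{t}\Big)+J(u)\Big\},\qquad \bar p=\operatorname*{argmax}_{p\in\mathbb{R}^n}\{\langle p,x\rangle-tH(p)-J^*(p)\}.$$ Moreover, for $\bar u,\bar p\in\mathbb{R}^n$ the following are equivalent: (a) $\bar u$ and $\bar p$ solve these two problems respectively; (b) $x=\bar u+t\nabla H(\bar p)$ and $J(\bar u)+J^*(\bar p)-\langle\bar p,\bar u\rangle=0$. Additionally, $$\min_{u\in\mathbb{R}^n}\Big\{tH^*\Big(\frac{x-u}{t}\Big)+J(u)\Big\}=\max_{p\in\mathbb{R}^n}\{\langle p,x\rangle-tH(p)-J^*(p)\}.$$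
   Context: $\Gamma_0(\mathbb{R}^n)$ denotes the set of proper, convex, lower semicontinuous functions $\mathbb{R}^n\to\mathbb{R}\cup\{+\infty\}$; $f^*$ is the Legendre–Fenchel transform. A function $g$ is 1-coercive if $g(x)/\|x\|\to+\infty$ as $\|x\|\to\infty$. A function $f\in\Gamma_0(\mathbb{R}^n)$ is Legendre if: $\mathrm{int}\,\mathrm{dom}\,f\neq\emptyset$; $f$ is differentiable on $\mathrm{int}\,\mathrm{dom}\,f$; $\partial f(x)=\emptyset$ for $x\in\mathrm{dom}\,f\setminus\mathrm{int}\,\mathrm{dom}\,f$ and $\partial f(x)=\{\nabla f(x)\}$ on $\mathrm{int}\,\mathrm{dom}\,f$; and $f$ is strictly convex on $\mathrm{int}\,\mathrm{dom}\,f$. Assumption (A1): $J,H\in\Gamma_0(\mathbb{R}^n)$, $J$ is 1-coercive, and $H$ is a Legendre function. *)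

From HB Require Import structures.
From mathcomp Require Import all_boot all_order all_algebra.
From mathcomp Require Import all_classical all_reals all_analysis.
Set Implicit Arguments. Unset Strict Implicit. Unset Printing Implicit Defensive.
Import Order.TTheory GRing.Theory Num.Theory.
Import numFieldNormedType.Exports.
Local Open Scope classical_set_scope.
Local Open Scope ring_scope.

Section ConvexDefs.
Variables (R : realType) (n : nat).
Notation V := 'rV[R]_n.

Definition dotp (u v : V) : R := \sum_(i < n) u ord0 i * v ord0 i.
Definition enorm (u : V) : R := Num.sqrt (dotp u u).

Definition edom (f : V -> \bar R) : set V := [set x | (f x < +oo)%E].

Definition proper_fun (f : V -> \bar R) : Prop :=
  (forall x, f x != -oo%E) /\ (exists x, (f x < +oo)%E).

Definition convex_fun (f : V -> \bar R) : Prop :=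
  forall x y (l : R), edom f x -> edom f y -> 0 < l -> l < 1 ->
    (f ((1 - l) *: x + l *: y)%R <= (1 - l)%:E * f x + l%:E * f y)%E.

Definition lsc_fun (f : V -> \bar R) : Prop :=
  forall x (a : R), (a%:E < f x)%E -> \forall y \near x, (a%:E < f y)%E.

Definition Gamma0 (f : V -> \bar R) : Prop :=
  [/\ proper_fun f, convex_fun f & lsc_fun f].

Definition lf_conj (f : V -> \bar R) : V -> \bar R :=
  fun p => ereal_sup [set ((dotp p x)%:E - f x)%E | x in [set: V]].

Definition coercive1 (g : V -> \bar R) : Prop :=
  forall M : R, exists r : R, forall x, r < enorm x ->
    (M%:E < g x * (enorm x)^-1%:E)%E.

Definition subdiff (f : V -> \bar R) (x : V) : set V :=
  [set p | forall y, (f x + (dotp p (y - x))%:E <= f y)%E].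

Definition freal (f : V -> \bar R) : V -> R := fun x => fine (f x).

Definition grad (f : V -> \bar R) (x : V) : V :=
  \row_(i < n) ('D_(delta_mx ord0 i) (freal f) x : R).

Definition Legendre (f : V -> \bar R) : Prop :=
  Gamma0 f /\ [/\ interior (edom f) !=set0,
      (forall x, interior (edom f) x -> differentiable (freal f) x),
      (forall x, edom f x -> ~ interior (edom f) x -> subdiff f x = set0),
      (forall x, interior (edom f) x -> subdiff f x = [set grad f x]) &
      (forall x y (l : R), interior (edom f) x -> interior (edom f) y ->
          x != y -> 0 < l -> l < 1 ->
          (f ((1 - l) *: x + l *: y)%R < (1 - l)%:E * f x + l%:E * f y)%E)].

Definition is_minimizer (F : V -> \bar R) (u : V) : Prop :=
  forall v, (F u <= F v)%E.
Definition is_maximizer (G : V -> \bar R) (p : V) : Prop :=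
  forall q, (G q <= G p)%E.

End ConvexDefs.

From HB Require Import structures.
From mathcomp Require Import all_boot all_order all_algebra.
From mathcomp Require Import all_classical all_reals all_analysis.
From mathcomp Require Import lra ring.
Import Order.TTheory GRing.Theory Num.Theory.
Import numFieldNormedType.Exports.
Local Open Scope classical_set_scope.
Local Open Scope ring_scope.
Set Implicit Arguments. Unset Strict Implicit. Unset Printing Implicit Defensive.

(** Weak duality [G p <= F u] is Fenchel--Young for [H] and for [J].  A primal
    minimizer [ub] exists because [F] is lower semicontinuous and inherits the
    1-coercivity of [J].  To find a dual point closing the gap without a
    subdifferential sum rule, regularize [J] into
    [Jreg v = J v + |v - ub|^2 / 2]: its conjugate is finite and has a quadratic
    upper bound near any point where it is attained.  The regularized dual
    objective [t H p + Jreg^* p - <p, x>] attains its minimum at some [pt],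
    because [b \in int dom H^*] makes [H] grow linearly in every direction;
    if [vt] attains [Jreg^* pt], first-order perturbations show
    [(x - vt) / t \in dH(pt)] and [pt - (vt - ub) \in dJ(vt)].  Minimality of
    [ub] then forces [vt = ub], which yields a pair satisfying (b).  Equal
    optimal values turn any optimal pair into one satisfying (b) via the
    equality case of Fenchel--Young; the Legendre property turns [dH(p)] into
    [grad H p]; uniqueness of the primal solution follows from
    [x = u + t grad H p], that of the dual one from strict convexity of [H] on
    [int dom H]. *)

Lemma ge0_of_perturbed_ge0 (R : realFieldType) (a b : R) :
  (forall s, 0 < s -> s < 1 -> 0 <= a + s * b) -> 0 <= a.
Proof.
move=> h; rewrite leNgt; apply/negP => a0.
pose s := Num.min (1/2) (- a / (2 * (`|b| + 1))).
have b1 : 0 < `|b| + 1 by rewrite ltr_wpDl.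
have s0 : 0 < s.
  by rewrite lt_min; apply/andP; split => //; rewrite divr_gt0 // ?oppr_gt0 // mulr_gt0.
have s1 : s < 1 by rewrite gt_min; apply/orP; left; lra.
have sb : s * b <= s * `|b| by apply: ler_wpM2l; [exact: ltW | exact: ler_norm].
have sle : s <= - a / (2 * (`|b| + 1)) by rewrite ge_min lexx orbT.
have hq : - a / (2 * (`|b| + 1)) * (`|b| + 1) = - a / 2 by field; rewrite gt_eqF.
have := h s s0 s1; have : 0 <= `|b| by []; nra.
Qed.

Lemma sum_continuous (R : realType) (T : topologicalType) (I : finType)
    (f : I -> T -> R) :
  (forall i, continuous (f i)) -> continuous (fun v => \sum_i f i v).
Proof.
move=> fc; suff : forall s : seq I, continuous (fun v => \sum_(i <- s) f i v) by apply.
elim=> [|i s ih]; first by under eq_fun do rewrite big_nil; exact: cst_continuous.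
by under eq_fun do rewrite big_cons; move=> v; apply: continuousD; [exact: fc | exact: ih].
Qed.

Section InnerProduct.
Variables (R : realType) (n : nat).
Local Notation V := 'rV[R]_n.
Implicit Types u v w p : V.

Lemma dotpC u v : dotp u v = dotp v u.
Proof. by apply: eq_bigr => i _; rewrite mulrC. Qed.

Lemma dotpDr u v w : dotp u (v + w) = dotp u v + dotp u w.
Proof. by rewrite /dotp -big_split; apply: eq_bigr => i _; rewrite mxE mulrDr. Qed.

Lemma dotpZr u v (a : R) : dotp u (a *: v) = a * dotp u v.
Proof. by rewrite /dotp mulr_sumr; apply: eq_bigr => i _; rewrite mxE mulrCA. Qed.

Lemma dotpNr u v : dotp u (- v) = - dotp u v.
Proof. by rewrite -scaleN1r dotpZr mulN1r. Qed.

Lemma dotpBr u v w : dotp u (v - w) = dotp u v - dotp u w.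
Proof. by rewrite dotpDr dotpNr. Qed.

Lemma dotpDl u v w : dotp (v + w) u = dotp v u + dotp w u.
Proof. by rewrite dotpC dotpDr !(dotpC u). Qed.

Lemma dotpZl u v (a : R) : dotp (a *: v) u = a * dotp v u.
Proof. by rewrite dotpC dotpZr dotpC. Qed.

Lemma dotpBl u v w : dotp (v - w) u = dotp v u - dotp w u.
Proof. by rewrite !(dotpC _ u) dotpBr. Qed.

Lemma dotp0l u : dotp 0 u = 0.
Proof. by rewrite /dotp big1 // => i _; rewrite mxE mul0r. Qed.

Lemma dotpp_ge0 u : 0 <= dotp u u.
Proof. by apply: sumr_ge0 => i _; rewrite -expr2 sqr_ge0. Qed.

Lemma dotppD u v : dotp (u + v) (u + v) = dotp u u + 2 * dotp u v + dotp v v.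
Proof. by rewrite dotpDl !dotpDr (dotpC v u); ring. Qed.

Lemma dotppB u v : dotp (u - v) (u - v) = dotp u u - 2 * dotp u v + dotp v v.
Proof. by rewrite dotpBl !dotpBr (dotpC v u); ring. Qed.

Lemma dotppZ u (s : R) : dotp (s *: u) (s *: u) = s ^+ 2 * dotp u u.
Proof. by rewrite dotpZl dotpZr; ring. Qed.

Lemma sqr_coord_le_dotpp u i : u ord0 i ^+ 2 <= dotp u u.
Proof.
rewrite /dotp (bigD1 i) //= -expr2 lerDl.
by apply: sumr_ge0 => j _; rewrite -expr2 sqr_ge0.
Qed.

Lemma dotpp_eq0 u : dotp u u = 0 -> u = 0.
Proof.
move=> h; apply/rowP => i; rewrite mxE; apply/eqP; rewrite -sqrf_eq0.
by rewrite eq_le sqr_ge0 andbT -h sqr_coord_le_dotpp.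
Qed.

Lemma normr_coord_le_enorm u i : `|u ord0 i| <= enorm u.
Proof.
rewrite /enorm -(sqrtr_sqr (u ord0 i)) ler_sqrt ?dotpp_ge0 //.
exact: sqr_coord_le_dotpp.
Qed.

Lemma normr_dotp_le p u : `|dotp p u| <= (\sum_i `|p ord0 i|) * enorm u.
Proof.
rewrite /dotp mulr_suml; apply: le_trans (ler_norm_sum _ _ _) _.
by apply: ler_sum => i _; rewrite normrM ler_wpM2l // normr_coord_le_enorm.
Qed.

Lemma dotp_delta_mx p i : dotp p (delta_mx ord0 i) = p ord0 i.
Proof.
rewrite /dotp (bigD1 i) //= big1 ?addr0; first by rewrite mxE !eqxx mulr1.
by move=> j /negbTE ji; rewrite mxE ji andbF mulr0.
Qed.

Lemma dotp_continuous p : continuous (dotp p).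
Proof.
apply: sum_continuous => i v.
by apply: continuousM; [exact: cst_continuous | exact: coord_continuous].
Qed.

Lemma dotp_continuous_l w : continuous (fun v => dotp v w).
Proof. by under eq_fun do rewrite dotpC; exact: dotp_continuous. Qed.

Lemma dotpp_subr_continuous c : continuous (fun v => dotp (v - c) (v - c)).
Proof.
apply: sum_continuous => i v.
have hc : continuous (fun v : V => (v - c) ord0 i).
  move=> w; under eq_fun do rewrite !mxE.
  by apply: continuousB; [exact: coord_continuous | exact: cst_continuous].
by apply: continuousM; apply: hc.
Qed.

Lemma interior_coord_segment (A : set V) b : interior A b ->
  exists2 d : R, 0 < d & forall i (s : R), `|s| <= d -> A (b + s *: delta_mx ord0 i).
Proof.
move=> /nbhs_ballP [e e0 sub]; exists (e / 2); first by rewrite divr_gt0.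
move=> i s hs; apply: sub; rewrite -ball_normE /ball_ /= opprD addNKr normrN normrZ.
have hd : `|s| * `|delta_mx ord0 i : V| <= `|s|.
  rewrite -[leRHS]mulr1; apply: ler_wpM2l => //.
  rewrite [`|_|]mx_normrE; apply: bigmax_le => // k _.
  by rewrite mxE; case: (_ && _); rewrite ?normr1 ?normr0.
rewrite /= in e0; lra.
Qed.

Lemma dotp_young p w : dotp p w <= dotp w w / 4 + dotp p p.
Proof.
have := dotpp_ge0 (2^-1 *: w - p).
rewrite dotppB dotppZ dotpZl (dotpC w p) expr2; lra.
Qed.

End InnerProduct.

Section ExtendedReals.
Variable R : realType.
Local Open Scope ereal_scope.

Lemma ereal_finP (u : \bar R) : u != -oo -> u != +oo -> exists r : R, u = r%:E.
Proof. by case: u => [r| |] // _ _; exists r. Qed.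

Lemma ereal_dense (m u : \bar R) : m < u -> exists a : R, m < a%:E < u.
Proof.
case: m => [m| |]; case: u => [u| |] // h.
- by exists ((m + u) / 2)%R; rewrite !lte_fin in h *; apply/andP; split; lra.
- by exists (m + 1)%R; rewrite lte_fin ltry andbT; lra.
- by exists (u - 1)%R; rewrite lte_fin ltNyr; lra.
- by exists 0%R; rewrite ltry ltNyr.
Qed.

Lemma lte_addeP (a : R) (u v : \bar R) : u != -oo -> v != -oo ->
  a%:E < u + v -> exists b : R, (a - b)%:E < u /\ b%:E < v.
Proof.
case: u => [u| |] // _; case: v => [v| |] // _.
- rewrite -EFinD lte_fin => h; exists (v - (u + v - a) / 2)%R.
  by rewrite !lte_fin; split; lra.
- by move=> _; exists (a - u + 1)%R; rewrite !lte_fin ltry; split => //; lra.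
- by move=> _; exists (v - 1)%R; rewrite !lte_fin ltry; split => //; lra.
- by move=> _; exists 0%R; rewrite !ltry.
Qed.

Lemma adde_neqNy (u v : \bar R) : u != -oo -> v != -oo -> u + v != -oo.
Proof. by case: u => [r| |]; case: v. Qed.

Lemma mulpe_neqNy (t : R) (u : \bar R) : (0 < t)%R -> u != -oo -> t%:E * u != -oo.
Proof. by move=> t0; case: u => [r| |] //= _; rewrite mulry gtr0_sg // mul1e. Qed.

End ExtendedReals.

Section LowerSemicontinuity.
Variables (R : realType) (n : nat).
Local Notation V := 'rV[R]_n.
Local Open Scope ereal_scope.

Lemma lsc_cst (c : \bar R) : lsc_fun (fun _ : V => c).
Proof. by move=> x a h; near=> y. Unshelve. end_near. Qed.

Lemma lsc_EFin (g : V -> R) : continuous g -> lsc_fun (fun v => (g v)%:E).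
Proof.
move=> gc x a; rewrite lte_fin => h.
have := gc x => /cvgr_gt /(_ a h) gt_a.
by near=> y; rewrite lte_fin; exact: (near gt_a y).
Unshelve. end_near.
Qed.

Lemma lscD (f g : V -> \bar R) : (forall v, f v != -oo) -> (forall v, g v != -oo) ->
  lsc_fun f -> lsc_fun g -> lsc_fun (fun v => f v + g v).
Proof.
move=> fN gN lf lg x a h.
have [b [hb1 hb2]] := lte_addeP (fN x) (gN x) h.
have near_f := lf _ _ hb1; have near_g := lg _ _ hb2.
near=> y.
have h1 : (a - b)%:E < f y by exact: (near near_f y).
have h2 : b%:E < g y by exact: (near near_g y).
by have := lteD h1 h2; rewrite -EFinD subrK.
Unshelve. end_near.
Qed.

Lemma lscZ (t : R) (f : V -> \bar R) : (0 < t)%R ->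
  lsc_fun f -> lsc_fun (fun v => t%:E * f v).
Proof.
move=> t0 lf x a.
have lt_scale (u : \bar R) : (a%:E < t%:E * u) = ((a / t)%:E < u).
  case: u => [r| |]; last 2 first.
  - by rewrite mulry gtr0_sg // mul1e !ltry.
  - by rewrite mulrNy gtr0_sg // mul1e.
  by rewrite -EFinM !lte_fin ltr_pdivrMr // mulrC.
rewrite lt_scale => /lf near_f.
by near=> y; rewrite lt_scale; exact: (near near_f y).
Unshelve. end_near.
Qed.

Lemma lsc_lf_conj_comp (f : V -> \bar R) (h : V -> V) :
  (forall z, continuous (fun w => dotp (h w) z)) -> lsc_fun (fun w => lf_conj f (h w)).
Proof.
move=> hc y a /ereal_sup_gt [_ [z _ <-]] hz.
have lsc_z : lsc_fun (fun w => (dotp (h w) z)%:E - f z).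
  move: hz; case: (f z) => [r| |] // _;
    (apply: lscD; [by [] | by [] | apply: lsc_EFin; exact: hc | exact: lsc_cst]).
have near_z := lsc_z y a hz.
near=> w.
have hw : a%:E < (dotp (h w) z)%:E - f z by exact: (near near_z w).
by apply: lt_le_trans hw _; apply: ereal_sup_ubound; exists z.
Unshelve. end_near.
Qed.

Lemma lsc_lf_conj (f : V -> \bar R) : lsc_fun (lf_conj f).
Proof. exact: (@lsc_lf_conj_comp f id (@dotp_continuous_l R n)). Qed.

Lemma lsc_attains_min_compact (f : V -> \bar R) (K : set V) :
  compact K -> lsc_fun f -> K !=set0 -> exists2 z, K z & forall y, K y -> f z <= f y.
Proof.
move=> cK lf [z0 Kz0].
set m := ereal_inf (f @` K).
have mle y : K y -> m <= f y by move=> Ky; apply: ereal_inf_lbound; exists y.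
have [mE|mN] := eqVneq m +oo.
  by exists z0 => // y Ky; have := mle y Ky; rewrite mE leye_eq => /eqP ->; exact: leey.
pose D := [set e : R | m < e%:E].
pose B := fun e : R => [set v | K v /\ f v < e%:E].
have [e0 /andP[De0 _]] : exists a : R, m < a%:E < +oo by apply: ereal_dense; rewrite ltey.
have PF : ProperFilter (filter_from D B).
  apply: filter_from_proper; last first.
    by move=> e /ereal_inf_lt [_ [v Kv <-] fv]; exists v.
  apply: filter_from_filter; first by exists e0.
  move=> i j Di Dj; exists (Order.min i j); first by rewrite /D /= EFin_min lt_min Di Dj.
  by move=> v [Kv hv]; split; split => //; apply: lt_le_trans hv _;
    rewrite lee_fin ge_min lexx ?orbT.
have [z [Kz clz]] := cK _ PF (ex_intro2 _ _ e0 De0 (fun v => @proj1 _ _)).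
exists z => // y Ky; apply: le_trans (mle y Ky).
rewrite leNgt; apply/negP => /ereal_dense [a /andP[ma az]].
have [v [[Kv fva] fav]] :=
  clz (B a) [set w | a%:E < f w] (ex_intro2 _ _ a ma (fun _ h => h)) (lf z a az).
by move: (lt_trans fav fva); rewrite ltxx.
Qed.

Lemma lsc_attains_min (f : V -> \bar R) (a : V) (r : R) : lsc_fun f ->
  (forall v : V, (exists i, r < `|v ord0 i|)%R -> f a < f v) ->
  exists z, forall y, f z <= f y.
Proof.
move=> lf out.
pose r' := Order.max r 0%R.
pose K := [set v : V | forall i, `[(- r')%R, r']%classic (v ord0 i)].
have cK : compact K.
  by apply: (@rV_compact _ _ (fun=> `[(- r')%R, r']%classic)) => i; exact: segment_compact.
have K0 : K !=set0.
  by exists 0%R => i; rewrite /= mxE in_itv /= lerNl oppr0 le_max lexx orbT.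
have [z Kz zmin] := lsc_attains_min_compact cK lf K0.
have outK v : ~ K v -> f a < f v.
  move=> nK; apply: out; apply/not_existsP => /= hall; apply: nK => i.
  have /negP := hall i; rewrite -leNgt => hi.
  by rewrite /= in_itv /= -ler_norml; apply: le_trans hi _; rewrite le_max lexx.
have za : f z <= f a.
  by have [/zmin//|/outK] := pselect (K a); rewrite ltxx.
by exists z => y; have [/zmin//|/outK/ltW] := pselect (K y); apply: le_trans.
Qed.

Lemma lsc_attains_min_enorm (f : V -> \bar R) (a : V) (r : R) : lsc_fun f ->
  (forall v : V, (r < enorm v)%R -> f a < f v) -> exists z, forall y, f z <= f y.
Proof.
move=> lf out; apply: (@lsc_attains_min f a r lf) => v [i hi]; apply: out.
exact: lt_le_trans hi (normr_coord_le_enorm v i).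
Qed.

Lemma coercive1_gt_affine (f : V -> \bar R) (p : V) (c : R) : coercive1 f ->
  exists r : R, forall v, (r < enorm v)%R -> (c + dotp p v)%:E < f v.
Proof.
move=> cf; pose S := (\sum_i `|p ord0 i|)%R.
have [r0 hr0] := cf (S + `|c| + 1)%R.
exists (Order.max r0 1)%R => v; rewrite gt_max => /andP[/hr0 hM e1].
have e0 : (0 < enorm v)%R by apply: lt_trans e1.
move: hM; case: (f v) => [fv| _ |]; last 2 first.
- by rewrite ltry.
- by rewrite mulNyr gtr0_sg ?invr_gt0 // mul1e.
rewrite -EFinM !lte_fin ltr_pdivlMr // => hM.
have := normr_dotp_le p v; rewrite -/S ler_norml => /andP[_ hd].
have : (0 <= (`|c| + 1) * (enorm v - 1))%R by rewrite mulr_ge0 // subr_ge0 ltW.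
have := ler_norm c; nra.
Qed.

Lemma coercive1_bounded_below (f : V -> \bar R) (a : V) :
  lsc_fun f -> coercive1 f -> (forall v, f v != -oo) -> edom f a ->
  exists m : R, forall v, m%:E <= f v.
Proof.
move=> lf cf fN /= fa.
have [fa' Efa] := ereal_finP (fN a) (negbT (lt_eqF fa)).
have [r hr] := coercive1_gt_affine 0 fa' cf.
have [z zmin] : exists z, forall y, f z <= f y.
  by apply: (@lsc_attains_min_enorm f a r lf) => v /hr; rewrite dotp0l addr0 Efa.
have [fz Efz] := ereal_finP (fN z) (negbT (lt_eqF (le_lt_trans (zmin a) fa))).
by exists fz => v; rewrite -Efz.
Qed.

End LowerSemicontinuity.

Section Conjugate.
Variables (R : realType) (n : nat).
Local Notation V := 'rV[R]_n.
Implicit Types (f : V -> \bar R) (p y g : V).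
Local Open Scope ereal_scope.

Lemma fenchel_young f p y : (dotp y p)%:E - f p <= lf_conj f y.
Proof. by apply: ereal_sup_ubound; exists p. Qed.

Lemma fenchel_young_fin f p y fp : f p = fp%:E -> (dotp y p - fp)%:E <= lf_conj f y.
Proof. by move=> E; rewrite EFinB -E; exact: fenchel_young. Qed.

Lemma lf_conj_le f y c : (forall p, (dotp y p)%:E - f p <= c) -> lf_conj f y <= c.
Proof. by move=> h; apply: ge_ereal_sup => _ [p _ <-]; exact: h. Qed.

Lemma lf_conj_le_fin f y (c : R) : (forall p, f p != -oo) ->
  (forall p fp, f p = fp%:E -> (dotp y p - fp <= c)%R) -> lf_conj f y <= c%:E.
Proof.
move=> fN h; apply: lf_conj_le => p.
move: (fN p) (h p); case: (f p) => [r| |] // _ hr.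
- by rewrite -EFinB lee_fin; exact: hr.
- by rewrite addeNy leNye.
Qed.

Lemma lf_conj_neqNy f p y : f p != +oo -> lf_conj f y != -oo.
Proof.
move=> fp; apply/negP => /eqP E.
by have := fenchel_young f p y; rewrite E leeNy_eq; move: fp; case: (f p).
Qed.

Lemma lf_conj_subdiff f p g fp : (forall v, f v != -oo) -> f p = fp%:E ->
  subdiff f p g -> lf_conj f g = (dotp g p - fp)%:E.
Proof.
move=> fN E sg; apply/le_anti/andP; split; last exact: fenchel_young_fin.
apply: lf_conj_le_fin => // q fq Eq.
by have := sg q; rewrite E Eq -EFinD lee_fin dotpBr; lra.
Qed.

Lemma subdiff_lf_conj f p g fp : f p = fp%:E ->
  lf_conj f g = (dotp g p - fp)%:E -> subdiff f p g.
Proof.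
move=> E C q; have := fenchel_young f q g; rewrite C E.
case: (f q) => [r| |].
- by rewrite -EFinB -EFinD !lee_fin dotpBr => h; lra.
- by rewrite leey.
- by rewrite /= addey // leye_eq.
Qed.

Lemma lf_conj_convex_fin f p1 p2 j1 j2 (l : R) : (forall v, f v != -oo) ->
  (0 <= l <= 1)%R -> lf_conj f p1 = j1%:E -> lf_conj f p2 = j2%:E ->
  lf_conj f ((1 - l) *: p1 + l *: p2)%R <= ((1 - l) * j1 + l * j2)%:E.
Proof.
move=> fN /andP[l0 l1] E1 E2; apply: lf_conj_le_fin => // w fw Ew.
have := fenchel_young_fin p1 Ew; have := fenchel_young_fin p2 Ew.
rewrite E1 E2 !lee_fin dotpDl !dotpZl => f2 f1.
have l1' : (0 <= 1 - l)%R by rewrite subr_ge0.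
have := ler_wpM2l l0 f2; have := ler_wpM2l l1' f1; lra.
Qed.

Lemma Legendre_subdiff f p g fp : Legendre f -> f p = fp%:E -> subdiff f p g ->
  interior (edom f) p /\ g = grad f p.
Proof.
case=> _ [_ _ bd int _] E sg.
have [pint|npint] := pselect (interior (edom f) p).
  by move: sg; rewrite int //= => ->.
by move: sg; rewrite bd // /edom /= E ltry.
Qed.

(* Fenchel--Young at the points [b +- d e_i], where [f^*] is finite. *)
Lemma interior_edom_lf_conj_growth f b : (forall y, lf_conj f y != -oo) ->
  interior (edom (lf_conj f)) b ->
  exists2 d : R, (0 < d)%R & exists C : R, forall p i fp, f p = fp%:E ->
    (dotp p b + d * `|p ord0 i| - C <= fp)%R.
Proof.
move=> fcN /interior_coord_segment [d d0 seg]; exists d => //.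
pose c i s := fine (lf_conj f (b + s *: delta_mx ord0 i)).
have cE i (s : R) : (`|s| <= d)%R -> lf_conj f (b + s *: delta_mx ord0 i) = (c i s)%:E.
  move=> hs; rewrite /c fineK //; apply/fin_numP; split; first exact: fcN.
  exact: negbT (lt_eqF (seg i s hs)).
exists (\sum_i (`|c i d| + `|c i (- d)|))%R => p i fp Ep.
pose s := (if (0 <= p ord0 i)%R then d else - d)%R.
have hs : (`|s| <= d)%R by rewrite /s; case: ifP => _; rewrite ?normrN gtr0_norm.
have sp : (s * p ord0 i = d * `|p ord0 i|)%R.
  rewrite /s; case: ifP => h; first by rewrite ger0_norm.
  by rewrite ltr0_norm ?mulrN ?mulNr // ltNge h.
have cC : (c i s <= \sum_i (`|c i d| + `|c i (- d)|))%R.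
  apply: (@le_trans _ _ (`|c i d| + `|c i (- d)|)%R).
    by rewrite /s; case: ifP => _; apply: le_trans (ler_norm _) _;
      rewrite ?lerDl ?lerDr.
  by rewrite (bigD1 i) //= lerDl sumr_ge0 // => j _; exact: addr_ge0.
have := fenchel_young_fin (b + s *: delta_mx ord0 i) Ep.
rewrite cE // lee_fin dotpC dotpDr dotpZr dotp_delta_mx sp dotpC; lra.
Qed.

Lemma convex_fun_segment f u w fu fw (s : R) : convex_fun f ->
  (forall v, f v != -oo) -> f u = fu%:E -> f w = fw%:E -> (0 < s < 1)%R ->
  exists2 fs, f (u + s *: (w - u))%R = fs%:E & (fs <= (1 - s) * fu + s * fw)%R.
Proof.
move=> cf fN Eu Ew /andP[s0 s1].
have := cf u w s; rewrite /edom /= Eu Ew !ltry => /(_ isT isT s0 s1).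
rewrite scalerBr scalerBl scale1r addrAC -addrA -!EFinM -EFinD => cv.
have [fs Efs] := ereal_finP (fN _) (negbT (lt_eqF (le_lt_trans cv (ltry _)))).
by exists fs => //; rewrite -lee_fin -Efs.
Qed.

End Conjugate.

Section PrimalDual.
Variables (R : realType) (n : nat) (J H : 'rV[R]_n -> \bar R) (t : R)
  (x a b : 'rV[R]_n).
Hypotheses (GJ : Gamma0 J) (GH : Gamma0 H) (cJ : coercive1 J) (LH : Legendre H)
  (t0 : (0 < t)%R) (Ja : edom J a) (bint : interior (edom (lf_conj H)) b)
  (xab : x = a + t *: b).
Local Notation V := 'rV[R]_n.
Local Open Scope ereal_scope.

Definition primal_obj u := t%:E * lf_conj H (t^-1 *: (x - u)) + J u.
Definition dual_obj p := (dotp p x)%:E - t%:E * H p - lf_conj J p.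

Let JN v : J v != -oo. Proof. by case: GJ => [[]]. Qed.
Let HN v : H v != -oo. Proof. by case: GH => [[]]. Qed.
Let Jconv : convex_fun J. Proof. by case: GJ. Qed.
Let Hconv : convex_fun H. Proof. by case: GH. Qed.
Let Jlsc : lsc_fun J. Proof. by case: GJ. Qed.
Let Hlsc : lsc_fun H. Proof. by case: GH. Qed.
Let H_somewhere_fin : exists p0 h0, H p0 = h0%:E.
Proof.
by case: GH => [[_ [p0 hp0]] _ _]; have [h0] := ereal_finP (HN p0) (negbT (lt_eqF hp0));
  exists p0, h0.
Qed.
Let HcN y : lf_conj H y != -oo.
Proof. by have [p0 [h0 E]] := H_somewhere_fin; apply: (@lf_conj_neqNy _ _ _ p0); rewrite E. Qed.
Let JcN p : lf_conj J p != -oo.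
Proof. by apply: (@lf_conj_neqNy _ _ _ a); rewrite -ltey. Qed.
Let J_a_fin : exists ja, J a = ja%:E.
Proof. exact: ereal_finP (JN a) (negbT (lt_eqF Ja)). Qed.

Let interior_edom_fin p : interior (edom H) p -> exists hp, H p = hp%:E.
Proof. by move=> /interior_subset /= /lt_eqF /negbT; exact: ereal_finP. Qed.

Let mul_t_pinfty : t%:E * +oo = +oo. Proof. by rewrite mulry gtr0_sg // mul1e. Qed.

Lemma dual_obj_Hinf p : H p = +oo -> dual_obj p = -oo.
Proof. by move=> E; rewrite /dual_obj E mul_t_pinfty /= addeNy addNye. Qed.

Lemma dual_obj_Jconj_inf p : lf_conj J p = +oo -> dual_obj p = -oo.
Proof. by move=> E; rewrite /dual_obj E /= addeNy. Qed.

Lemma primal_obj_Jinf u : J u = +oo -> primal_obj u = +oo.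
Proof. by move=> E; rewrite /primal_obj E addey // mulpe_neqNy. Qed.

Lemma primal_obj_Hconj_inf u : lf_conj H (t^-1 *: (x - u)) = +oo -> primal_obj u = +oo.
Proof. by move=> E; rewrite /primal_obj E mul_t_pinfty addye. Qed.

Lemma dotp_scaled_residual u p :
  (t * dotp (t^-1 *: (x - u)) p = dotp p x - dotp p u)%R.
Proof. by rewrite dotpZl mulrA mulfV ?gt_eqF // mul1r dotpC dotpBr. Qed.

Lemma weak_duality u p : dual_obj p <= primal_obj u.
Proof.
set y := t^-1 *: (x - u).
case EH: (H p) => [hp| |]; [|by rewrite dual_obj_Hinf ?leNye|by have := HN p; rewrite EH].
case EJc: (lf_conj J p) => [jc| |];
  [|by rewrite dual_obj_Jconj_inf ?leNye|by have := JcN p; rewrite EJc].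
case EJ: (J u) => [ju| |]; [|by rewrite primal_obj_Jinf ?leey|by have := JN u; rewrite EJ].
case EHc: (lf_conj H y) => [hc| |];
  [|by rewrite primal_obj_Hconj_inf ?leey|by have := HcN y; rewrite EHc].
have := fenchel_young_fin y EH; rewrite EHc lee_fin => fyH.
have := fenchel_young_fin p EJ; rewrite EJc lee_fin => fyJ.
rewrite /dual_obj /primal_obj -/y EH EJc EJ EHc -!EFinM -!EFinB -!EFinD lee_fin.
by have := ler_wpM2l (ltW t0) fyH; rewrite mulrBr dotp_scaled_residual; lra.
Qed.

Lemma scaled_residual_subdiff_grad u p hp : H p = hp%:E ->
  subdiff H p (t^-1 *: (x - u)) -> interior (edom H) p /\ x = (u + t *: grad H p)%R.
Proof.
move=> Ep /(Legendre_subdiff LH Ep) [pint <-]; split => //.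
by rewrite scalerA mulfV ?gt_eqF // scale1r addrC subrK.
Qed.

Lemma primal_eq_dual_of_optimality u p : interior (edom H) p ->
  x = (u + t *: grad H p)%R -> J u + lf_conj J p - (dotp p u)%:E = 0 ->
  primal_obj u = dual_obj p.
Proof.
move=> pint xE J0.
have [hp Ehp] := interior_edom_fin pint.
have sg : subdiff H p (grad H p) by case: LH => _ [_ _ _ int _]; rewrite (int _ pint).
have yE : t^-1 *: (x - u) = grad H p.
  by rewrite xE addrC addKr scalerA mulVf ?gt_eqF // scale1r.
move: J0; case EJ: (J u) => [ju| |]; case EJc: (lf_conj J p) => [jc| |] //=;
  try by [have := JN u; rewrite EJ | have := JcN p; rewrite EJc].
move=> /eqP; rewrite eqe => /eqP J0.
rewrite /primal_obj /dual_obj yE (lf_conj_subdiff HN Ehp sg) Ehp EJ EJc.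
rewrite -!EFinM -!EFinB -!EFinD; congr (_%:E).
by have := dotp_scaled_residual u p; rewrite yE mulrBr => ->; lra.
Qed.

Lemma optimality_sufficient u p : interior (edom H) p ->
  x = (u + t *: grad H p)%R -> J u + lf_conj J p - (dotp p u)%:E = 0 ->
  is_minimizer primal_obj u /\ is_maximizer dual_obj p.
Proof.
move=> pint xE J0; have E := primal_eq_dual_of_optimality pint xE J0.
by split => v; [rewrite E | rewrite -E]; exact: weak_duality.
Qed.

Lemma primal_obj_lsc : lsc_fun primal_obj.
Proof.
apply: lscD => //; first by move=> v; exact: mulpe_neqNy.
apply: lscZ => //; apply: lsc_lf_conj_comp => z.
have -> : (fun w => dotp (t^-1 *: (x - w)) z) =
    ((fun=> t^-1) \* ((fun=> dotp x z) - (fun w => dotp w z)))%R.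
  by apply/funext => w; rewrite dotpZl dotpBl.
move=> w; apply: continuousM; first exact: cst_continuous.
by apply: continuousB; [exact: cst_continuous | exact: dotp_continuous_l].
Qed.

Lemma primal_obj_a_fin : exists fa, primal_obj a = fa%:E.
Proof.
have ya : t^-1 *: (x - a) = b by rewrite xab addrC addKr scalerA mulVf ?gt_eqF // scale1r.
have [hb Ehb] := ereal_finP (HcN b) (negbT (lt_eqF (interior_subset bint))).
have [ja Eja] := J_a_fin.
by exists (t * hb + ja)%R; rewrite /primal_obj ya Ehb Eja -EFinM -EFinD.
Qed.

Lemma primal_min_exists : exists u, is_minimizer primal_obj u.
Proof.
have [fa Efa] := primal_obj_a_fin; have [p0 [h0 Eh0]] := H_somewhere_fin.
have [r hr] := coercive1_gt_affine p0 (fa - dotp p0 x + t * h0) cJ.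
apply: (@lsc_attains_min_enorm _ _ _ a r primal_obj_lsc) => v /hr; rewrite Efa.
set y := t^-1 *: (x - v).
case EJ: (J v) => [jv| |]; [|by rewrite primal_obj_Jinf ?ltry|by have := JN v; rewrite EJ].
case EHc: (lf_conj H y) => [hc| |];
  [|by rewrite primal_obj_Hconj_inf ?ltry|by have := HcN y; rewrite EHc].
have := fenchel_young_fin y Eh0; rewrite EHc lee_fin => fy.
rewrite /primal_obj -/y EHc EJ -EFinM -EFinD !lte_fin.
by have := ler_wpM2l (ltW t0) fy; rewrite mulrBr dotp_scaled_residual; lra.
Qed.

Section Regularization.
Variables (ub : V) (m : R).
Hypotheses (ubmin : is_minimizer primal_obj ub) (mlb : forall v, m%:E <= J v).

Definition Jreg v := J v + (dotp (v - ub) (v - ub) / 2)%:E.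

Let JregN v : Jreg v != -oo. Proof. exact: adde_neqNy. Qed.

Lemma Jreg_fin v jv : J v = jv%:E -> Jreg v = (jv + dotp (v - ub) (v - ub) / 2)%:E.
Proof. by move=> E; rewrite /Jreg E -EFinD. Qed.

Lemma Jreg_pinfty v : J v = +oo -> Jreg v = +oo.
Proof. by move=> E; rewrite /Jreg E addye. Qed.

Lemma Jreg_finP v r : Jreg v = r%:E ->
  exists2 jv, J v = jv%:E & r = (jv + dotp (v - ub) (v - ub) / 2)%R.
Proof.
case EJ: (J v) => [jv| |]; [|by rewrite Jreg_pinfty|by have := JN v; rewrite EJ].
by rewrite (Jreg_fin EJ) => -[<-]; exists jv.
Qed.

Lemma Jreg_conj_fin p : exists r, lf_conj Jreg p = r%:E.
Proof.
have [ja Eja] := J_a_fin.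
apply: ereal_finP; first by apply: (@lf_conj_neqNy _ _ _ a); rewrite (Jreg_fin Eja).
apply: negbT; apply: lt_eqF; apply: (@le_lt_trans _ _ (dotp p ub + dotp p p / 2 - m)%:E);
  last exact: ltry.
apply: lf_conj_le_fin => // q r /Jreg_finP [jq Eq ->].
have := mlb q; rewrite Eq lee_fin => mjq.
by have := dotpp_ge0 (p - (q - ub)); rewrite dotppB dotpBr; lra.
Qed.

Definition reg_dual_obj p := t%:E * H p + lf_conj Jreg p - (dotp p x)%:E.

Lemma reg_dual_obj_lsc : lsc_fun reg_dual_obj.
Proof.
have JregcN p : lf_conj Jreg p != -oo by have [r ->] := Jreg_conj_fin p.
apply: lscD => //; first by move=> p; apply: adde_neqNy => //; exact: mulpe_neqNy.
  apply: lscD => //; [by move=> p; exact: mulpe_neqNy | exact: lscZ |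
                      exact: lsc_lf_conj].
apply: lsc_EFin.
have -> : (fun p : V => - dotp p x)%R = ((fun=> -1) \* (fun p : V => dotp p x))%R.
  by apply/funext => p /=; rewrite mulN1r.
by move=> p; apply: continuousM; [exact: cst_continuous | exact: dotp_continuous_l].
Qed.

Lemma reg_dual_obj_Hinf p : H p = +oo -> reg_dual_obj p = +oo.
Proof.
have [r Er] := Jreg_conj_fin p.
by move=> E; rewrite /reg_dual_obj E mul_t_pinfty Er.
Qed.

(* The growth of [t H] furnished by [b \in int dom H^*] beats the linear
   growth of the conjugate of [Jreg]. *)
Lemma reg_dual_min_exists : exists pt, is_minimizer reg_dual_obj pt.
Proof.
have [d d0 [C hC]] := interior_edom_lf_conj_growth HcN bint.
have [p0 [h0 Eh0]] := H_somewhere_fin; have [jc0 Ejc0] := Jreg_conj_fin p0.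
have [ja Eja] := J_a_fin; have Ejra := Jreg_fin Eja; set jra := (ja + _)%R in Ejra.
pose phi0 := (t * h0 + jc0 - dotp p0 x)%R.
have Ephi0 : reg_dual_obj p0 = phi0%:E by rewrite /reg_dual_obj Eh0 Ejc0 -EFinM -!EFinD.
pose r := ((`|phi0| + t * C + `|jra| + 1) / (t * d))%R.
apply: (@lsc_attains_min _ _ reg_dual_obj p0 r reg_dual_obj_lsc) => p [i hi].
rewrite Ephi0.
case EH: (H p) => [hp| |]; [|by rewrite reg_dual_obj_Hinf ?ltry|by have := HN p; rewrite EH].
have [jc Ejc] := Jreg_conj_fin p.
rewrite /reg_dual_obj EH Ejc -EFinM -!EFinD lte_fin.
have := fenchel_young_fin p Ejra; rewrite Ejc lee_fin => fy.
have := ler_wpM2l (ltW t0) (hC p i hp EH); rewrite mulrBr mulrDr mulrA => hg.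
have hx : dotp p x = (dotp p a + t * dotp p b)%R by rewrite xab dotpDr dotpZr.
have td : (0 < t * d)%R by rewrite mulr_gt0.
have hr : (t * d * r = `|phi0| + t * C + `|jra| + 1)%R.
  by rewrite /r mulrC -mulrA mulVf ?mulr1 // gt_eqF.
have : (t * d * r < t * d * `|p ord0 i|)%R by rewrite ltr_pM2l.
have := ler_norm phi0; have := ler_norm jra; lra.
Qed.

Lemma Jreg_sub_dotp_min_exists p :
  exists vt, forall v, Jreg vt - (dotp p vt)%:E <= Jreg v - (dotp p v)%:E.
Proof.
pose psi v := J v + (dotp (v - ub) (v - ub) / 2 - dotp p v)%R%:E.
suff [z zmin] : exists z, forall y, psi z <= psi y.
  by exists z => y; rewrite /Jreg -!addeA -!EFinB; exact: zmin.
have [ja Eja] := J_a_fin.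
pose psia := (ja + (dotp (a - ub) (a - ub) / 2 - dotp p a))%R.
pose K := (`|psia| + `|m| + dotp p p + `|dotp p ub|)%R.
apply: (@lsc_attains_min _ _ psi a (\sum_j `|ub ord0 j| + (4 * K + 1))%R).
  apply: lscD => //.
  apply: lsc_EFin.
  have -> : (fun v : V => dotp (v - ub) (v - ub) / 2 - dotp p v)%R =
      ((fun v : V => dotp (v - ub) (v - ub)) \* (fun=> 2^-1) - dotp p)%R by [].
  move=> v; apply: continuousB; last exact: dotp_continuous.
  by apply: continuousM; [exact: dotpp_subr_continuous | exact: cst_continuous].
move=> v [i hi]; rewrite /psi Eja -EFinD -/psia.
case EJ: (J v) => [jv| |]; [|by rewrite ltry|by have := JN v; rewrite EJ].
rewrite -EFinD lte_fin.
have := mlb v; rewrite EJ lee_fin => mv.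
have young := dotp_young p (v - ub); rewrite dotpBr in young.
have := sqr_coord_le_dotpp (v - ub) i; rewrite !mxE => hw.
have hub : (`|ub ord0 i| <= \sum_j `|ub ord0 j|)%R.
  by rewrite (bigD1 i) //= lerDl sumr_ge0.
have hvi : (4 * K + 1 < `|v ord0 i - ub ord0 i|)%R.
  by have := ler_dist_dist (v ord0 i) (ub ord0 i); have := ler_norm (`|v ord0 i| - `|ub ord0 i|); lra.
have K0 : (0 <= K)%R by rewrite /K !addr_ge0 // dotpp_ge0.
have hsq : (`|v ord0 i - ub ord0 i| <= (v ord0 i - ub ord0 i) ^+ 2)%R.
  by rewrite -real_normK ?num_real // expr2 ler_peMr //; lra.
have := ler_norm psia; have := ler_norm (- m); have := ler_norm (dotp p ub).
have KE : K = (`|psia| + `|m| + dotp p p + `|dotp p ub|)%R by [].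
by rewrite normrN; clearbody psia K; lra.
Qed.

Lemma primal_obj_ub_parts_fin :
  (exists ju, J ub = ju%:E) /\ exists hc, lf_conj H (t^-1 *: (x - ub)) = hc%:E.
Proof.
have [fa Efa] := primal_obj_a_fin.
have Fub : primal_obj ub < +oo by apply: le_lt_trans (ubmin a) _; rewrite Efa ltry.
split; apply: ereal_finP => //; apply: contraTneq Fub => E.
- by rewrite primal_obj_Jinf // ltxx.
- by rewrite primal_obj_Hconj_inf // ltxx.
Qed.

Section RegularizedSolution.
Variables (pt vt : V).
Hypotheses (ptmin : is_minimizer reg_dual_obj pt)
  (vtmin : forall v, Jreg vt - (dotp pt vt)%:E <= Jreg v - (dotp pt v)%:E).

Lemma J_vt_fin : exists jv, J vt = jv%:E.
Proof.
have [[ju Eju] _] := primal_obj_ub_parts_fin.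
apply: ereal_finP (JN vt) _; apply/negP => /eqP E.
by have := vtmin ub; rewrite (Jreg_pinfty E) (Jreg_fin Eju) /= leye_eq -EFinB.
Qed.

Lemma Jreg_conj_pt jv : J vt = jv%:E ->
  lf_conj Jreg pt = (dotp pt vt - (jv + dotp (vt - ub) (vt - ub) / 2))%:E.
Proof.
move=> Ev; apply/le_anti/andP; split; last exact: (fenchel_young_fin pt (Jreg_fin Ev)).
apply: lf_conj_le_fin => // v r Er.
by have := vtmin v; rewrite (Jreg_fin Ev) Er -!EFinB lee_fin; lra.
Qed.

Lemma subdiff_J_vt : subdiff J vt (pt - (vt - ub))%R.
Proof.
have [jv Ev] := J_vt_fin.
move=> w; case Ew: (J w) => [jw| |]; [|by rewrite leey|by have := JN w; rewrite Ew].
rewrite Ev -EFinD lee_fin.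
suff : (0 <= jw - jv - dotp (pt - (vt - ub)) (w - vt))%R by lra.
apply: (@ge0_of_perturbed_ge0 _ _ (dotp (w - vt) (w - vt) / 2)) => s s0 s1.
have s01 : (0 < s < 1)%R by rewrite s0 s1.
have [jq Ejq cv] := convex_fun_segment (w := w) Jconv JN Ev Ew s01.
have := vtmin (vt + s *: (w - vt))%R.
rewrite (Jreg_fin Ev) (Jreg_fin Ejq) -!EFinB lee_fin (addrAC vt _ (- ub)%R).
rewrite (dotppD (vt - ub) (s *: (w - vt))) dotppZ dotpZr (dotpDr pt vt) dotpZr dotpBl => h.
have key : (0 <= s * (jw - jv - (dotp pt (w - vt) - dotp (vt - ub) (w - vt)) +
    s * (dotp (w - vt) (w - vt) / 2)))%R by nra.
by move: key; rewrite pmulr_rge0 // !dotpBl; lra.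
Qed.

Lemma Jreg_conj_upper jv h : J vt = jv%:E ->
  lf_conj Jreg (pt + h)%R <= (dotp pt vt - (jv + dotp (vt - ub) (vt - ub) / 2)
     + dotp h vt + dotp h h / 2)%:E.
Proof.
move=> Ev; apply: lf_conj_le_fin => // w r /Jreg_finP [jw Ew ->].
have := subdiff_J_vt w; rewrite Ev Ew -EFinD lee_fin.
have [d ->] : exists d, w = (vt + d)%R by exists (w - vt)%R; rewrite addrC subrK.
have -> : (vt + d - vt = d)%R by rewrite addrAC subrr add0r.
rewrite dotpBl (addrAC vt d (- ub)%R) (dotppD (vt - ub) d).
rewrite (dotpDl (vt + d) pt h) (dotpDr pt vt d) (dotpDr h vt d) => hs.
by have := dotpp_ge0 (h - d); rewrite dotppB; lra.
Qed.

Lemma H_pt_fin : exists hp, H pt = hp%:E.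
Proof.
apply: ereal_finP (HN pt) _; apply/negP => /eqP E.
have [p0 [h0 Eh0]] := H_somewhere_fin; have [jc0 Ejc0] := Jreg_conj_fin p0.
have := ptmin p0; rewrite reg_dual_obj_Hinf // /reg_dual_obj Eh0 Ejc0.
by rewrite -EFinM -!EFinD leye_eq.
Qed.

(* Move [pt] a step [s] towards [q]: by [Jreg_conj_upper] the conjugate term
   changes by at most its first-order part plus [O(s^2)]. *)
Lemma reg_dual_first_order q hq hp : H q = hq%:E -> H pt = hp%:E ->
  (dotp (x - vt) (q - pt) <= t * (hq - hp))%R.
Proof.
move=> Eq Ep; have [jv Ev] := J_vt_fin.
suff : (0 <= t * (hq - hp) - dotp (x - vt) (q - pt))%R by lra.
apply: (@ge0_of_perturbed_ge0 _ _ (dotp (q - pt) (q - pt) / 2)) => s s0 s1.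
have s01 : (0 < s < 1)%R by rewrite s0 s1.
have [hs Ehs cv] := convex_fun_segment (w := q) Hconv HN Ep Eq s01.
have := Jreg_conj_upper (s *: (q - pt))%R Ev.
have [jq Ejq] := Jreg_conj_fin (pt + s *: (q - pt))%R.
rewrite Ejq lee_fin dotpZl dotppZ => ju.
have := ptmin (pt + s *: (q - pt))%R.
rewrite /reg_dual_obj Ep Ehs Ejq (Jreg_conj_pt Ev) -!EFinM -!EFinD lee_fin.
rewrite (dotpDl x pt (s *: (q - pt))) (dotpZl x) => h.
have := ler_wpM2l (ltW t0) cv; rewrite dotpC dotpBr => ht.
have key : (0 <= s * (t * (hq - hp) - (dotp (q - pt) x - dotp (q - pt) vt) +
    s * (dotp (q - pt) (q - pt) / 2)))%R by nra.
by rewrite pmulr_rge0 // in key.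
Qed.

Lemma subdiff_H_pt : subdiff H pt (t^-1 *: (x - vt))%R.
Proof.
have [hp Ep] := H_pt_fin.
move=> q; case Eq: (H q) => [hq| |]; [|by rewrite leey|by have := HN q; rewrite Eq].
rewrite Ep -EFinD lee_fin dotpZl.
have ti : (0 <= t^-1)%R by rewrite invr_ge0 ltW.
have := ler_wpM2l ti (reg_dual_first_order Eq Ep).
by rewrite mulrA mulVf ?gt_eqF // mul1r; lra.
Qed.

(* Comparing [primal_obj ub <= primal_obj vt] with Fenchel--Young for [Jreg] at [ub]
   leaves [|vt - ub|^2 <= 0]. *)
Lemma vt_eq_ub : vt = ub.
Proof.
have [jv Ev] := J_vt_fin; have [hp Ep] := H_pt_fin.
have [[ju Eju] [hc Ehc]] := primal_obj_ub_parts_fin.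
have := fenchel_young_fin (t^-1 *: (x - ub))%R Ep; rewrite Ehc lee_fin => fyH.
have Jreg_ub : Jreg ub = ju%:E by rewrite (Jreg_fin Eju) subrr dotp0l mul0r addr0.
have := fenchel_young_fin pt Jreg_ub; rewrite (Jreg_conj_pt Ev) lee_fin => fyJ.
have := ubmin vt; rewrite /primal_obj Ehc Eju (lf_conj_subdiff HN Ep subdiff_H_pt) Ev.
rewrite -!EFinM -!EFinD lee_fin mulrBr dotp_scaled_residual => hmin.
have := ler_wpM2l (ltW t0) fyH; rewrite mulrBr dotp_scaled_residual => fyH'.
have : (dotp (vt - ub) (vt - ub) <= 0)%R by lra.
move=> h; apply/eqP; rewrite -subr_eq0; apply/eqP/dotpp_eq0/le_anti.
by rewrite h dotpp_ge0.
Qed.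

Lemma reg_optimality : [/\ interior (edom H) pt, x = (ub + t *: grad H pt)%R &
  J ub + lf_conj J pt - (dotp pt ub)%:E = 0].
Proof.
have [hp Ep] := H_pt_fin; have [[ju Eju] _] := primal_obj_ub_parts_fin.
have := subdiff_H_pt; rewrite vt_eq_ub => /(scaled_residual_subdiff_grad Ep) [pint xE].
split => //; have := subdiff_J_vt; rewrite vt_eq_ub subrr subr0.
move=> /(lf_conj_subdiff JN Eju) ->; rewrite Eju /=; congr (_%:E); ring.
Qed.

End RegularizedSolution.

End Regularization.

Lemma optimality_conditions_solvable : exists u p,
  [/\ interior (edom H) p, x = (u + t *: grad H p)%R &
      J u + lf_conj J p - (dotp p u)%:E = 0].
Proof.
have [ub ubmin] := primal_min_exists.
have [m mlb] := coercive1_bounded_below Jlsc cJ JN Ja.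
have [pt ptmin] := reg_dual_min_exists ub mlb.
have [vt vtmin] := Jreg_sub_dotp_min_exists ub mlb pt.
by exists ub, pt; have := reg_optimality ubmin mlb ptmin vtmin.
Qed.

Lemma optimality_of_equal_values u p c : primal_obj u = c%:E -> dual_obj p = c%:E ->
  [/\ interior (edom H) p, x = (u + t *: grad H p)%R &
      J u + lf_conj J p - (dotp p u)%:E = 0].
Proof.
set y := (t^-1 *: (x - u))%R => Fu Gp.
case EH: (H p) => [hp| |]; [|by rewrite dual_obj_Hinf in Gp|by have := HN p; rewrite EH].
case EJc: (lf_conj J p) => [jc| |];
  [|by rewrite dual_obj_Jconj_inf in Gp|by have := JcN p; rewrite EJc].
case EJ: (J u) => [ju| |]; [|by rewrite primal_obj_Jinf in Fu|by have := JN u; rewrite EJ].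
case EHc: (lf_conj H y) => [hc| |];
  [|by rewrite primal_obj_Hconj_inf in Fu|by have := HcN y; rewrite EHc].
have := fenchel_young_fin y EH; rewrite EHc lee_fin => fyH.
have := fenchel_young_fin p EJ; rewrite EJc lee_fin => fyJ.
move: Fu Gp; rewrite /primal_obj /dual_obj -/y EHc EJ EH EJc -!EFinM -!EFinD => -[Fu] [Gp].
have := dotp_scaled_residual u p; rewrite -/y => ty.
have := ler_wpM2l (ltW t0) fyH; rewrite mulrBr ty => fyH'.
have hcE : hc = (dotp y p - hp)%R.
  by apply: (mulfI (negbT (gt_eqF t0))); rewrite mulrBr ty; lra.
have /(scaled_residual_subdiff_grad EH) [pint xE] : subdiff H p y.
  by apply: (subdiff_lf_conj EH); rewrite EHc hcE.
by split => //=; congr (_%:E); lra.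
Qed.

Lemma optimal_pair_exists : exists u0 p0 c, [/\ is_minimizer primal_obj u0,
  is_maximizer dual_obj p0, primal_obj u0 = c%:E & dual_obj p0 = c%:E].
Proof.
have [u0 [p0 [pint xE J0]]] := optimality_conditions_solvable.
have [hp Ehp] := interior_edom_fin pint.
have [|jc Ejc] := ereal_finP (JcN p0).
  by apply/eqP => E; move: J0; rewrite E addey // addye.
have [mu mp] := optimality_sufficient pint xE J0.
exists u0, p0, (dotp p0 x - t * hp - jc)%R; split => //.
  by rewrite (primal_eq_dual_of_optimality pint xE J0) /dual_obj Ehp Ejc.
by rewrite /dual_obj Ehp Ejc.
Qed.

Lemma optimality_necessary u p : is_minimizer primal_obj u -> is_maximizer dual_obj p ->
  [/\ interior (edom H) p, x = (u + t *: grad H p)%R &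
      J u + lf_conj J p - (dotp p u)%:E = 0].
Proof.
move=> umin pmax; have [u0 [p0 [c [u0min p0max Fu0 Gp0]]]] := optimal_pair_exists.
have Fu : primal_obj u = c%:E.
  apply/le_anti; rewrite -{1}Fu0 umin -Gp0 /=.
  by apply: le_trans (pmax p0) _; exact: weak_duality.
apply: (optimality_of_equal_values Fu).
by apply/le_anti; rewrite -{1}Fu weak_duality -Gp0 pmax.
Qed.

Lemma primal_min_unique u1 u2 :
  is_minimizer primal_obj u1 -> is_minimizer primal_obj u2 -> u1 = u2.
Proof.
move=> u1min u2min; have [_ [p0 [_ [_ p0max _ _]]]] := optimal_pair_exists.
have [_ x1 _] := optimality_necessary u1min p0max.
have [_ x2 _] := optimality_necessary u2min p0max.
by apply: (addIr (t *: grad H p0)); rewrite -x1 -x2.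
Qed.

(* Strict convexity of [H] on [int dom H] and convexity of [J^*]. *)
Lemma dual_obj_midpoint_gt p1 p2 c : interior (edom H) p1 -> interior (edom H) p2 ->
  p1 != p2 -> dual_obj p1 = c%:E -> dual_obj p2 = c%:E ->
  c%:E < dual_obj ((1 - 2^-1) *: p1 + 2^-1 *: p2)%R.
Proof.
move=> int1 int2 p12 G1 G2.
have [h1 Eh1] := interior_edom_fin int1; have [h2 Eh2] := interior_edom_fin int2.
have h0 : (0 < 2^-1 :> R)%R by rewrite invr_gt0.
have h1' : (2^-1 < 1 :> R)%R by rewrite invf_lt1 // ltr1n.
have strict : H ((1 - 2^-1) *: p1 + 2^-1 *: p2)%R < ((1 - 2^-1) * h1 + 2^-1 * h2)%:E.
  by case: LH => _ [_ _ _ _ st]; rewrite EFinD !EFinM -Eh1 -Eh2; apply: st.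
set q := ((1 - 2^-1) *: p1 + 2^-1 *: p2)%R in strict *.
have [hq Ehq] := ereal_finP (HN q) (negbT (lt_eqF (lt_trans strict (ltry _)))).
case EJ1: (lf_conj J p1) => [j1| |];
  [|by rewrite dual_obj_Jconj_inf in G1|by have := JcN p1; rewrite EJ1].
case EJ2: (lf_conj J p2) => [j2| |];
  [|by rewrite dual_obj_Jconj_inf in G2|by have := JcN p2; rewrite EJ2].
have hl : (0 <= (2^-1 : R) <= 1)%R by apply/andP; split; exact: ltW.
have Jq := lf_conj_convex_fin JN hl EJ1 EJ2.
have [jq Ejq] := ereal_finP (JcN q) (negbT (lt_eqF (le_lt_trans Jq (ltry _)))).
move: strict Jq G1 G2; rewrite Ehq Ejq /dual_obj Eh1 Eh2 EJ1 EJ2 Ehq Ejq.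
rewrite -!EFinM -!EFinD !lte_fin lee_fin => strict Jq [G1] [G2].
have st : (t * hq < (1 - 2^-1) * (t * h1) + 2^-1 * (t * h2))%R.
  by rewrite !(mulrCA _ t) -mulrDr ltr_pM2l.
by rewrite /q dotpDl !dotpZl; lra.
Qed.

Lemma dual_max_unique p1 p2 :
  is_maximizer dual_obj p1 -> is_maximizer dual_obj p2 -> p1 = p2.
Proof.
move=> p1max p2max; have [u0 [_ [c [u0min _ Fu0 _]]]] := optimal_pair_exists.
have [int1 x1 J1] := optimality_necessary u0min p1max.
have [int2 _ J2] := optimality_necessary u0min p2max.
have G1 : dual_obj p1 = c%:E by rewrite -Fu0 (primal_eq_dual_of_optimality int1 x1 J1).
apply/eqP/negP => /negP p12.
have G2 : dual_obj p2 = c%:E by apply/le_anti; rewrite -G1 p1max p2max.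
have := dual_obj_midpoint_gt int1 int2 p12 G1 G2; rewrite -G1.
by move/lt_le_trans/(_ (p1max _)); rewrite ltxx.
Qed.

Lemma primal_dual_optimality :
  [/\ (exists! u, is_minimizer primal_obj u), (exists! p, is_maximizer dual_obj p),
      (forall u p, (is_minimizer primal_obj u /\ is_maximizer dual_obj p) <->
         [/\ interior (edom H) p, x = (u + t *: grad H p)%R &
             J u + lf_conj J p - (dotp p u)%:E = 0]) &
      (forall u p, is_minimizer primal_obj u -> is_maximizer dual_obj p ->
         primal_obj u = dual_obj p)].
Proof.
have [u0 [p0 [_ [u0min p0max _ _]]]] := optimal_pair_exists.
split.
- by exists u0; split => // u; exact: primal_min_unique.
- by exists p0; split => // p; exact: dual_max_unique.
- move=> u p; split => [[]|[]]; first exact: optimality_necessary.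
  exact: optimality_sufficient.
- move=> u p umin pmax; have [pint xE J0] := optimality_necessary umin pmax.
  exact: primal_eq_dual_of_optimality.
Qed.

End PrimalDual.

Theorem proposition4p1 (R : realType) (n : nat)
  (J H : 'rV[R]_n -> \bar R) (t : R) (x : 'rV[R]_n) :
  Gamma0 J -> Gamma0 H -> coercive1 J -> Legendre H ->
  0 < t ->
  (exists a b, edom J a /\ interior (edom (lf_conj H)) b /\ x = a + t *: b) ->
  let F := fun u => (t%:E * lf_conj H (t^-1 *: (x - u)) + J u)%E in
  let G := fun p => ((dotp p x)%:E - t%:E * H p - lf_conj J p)%E in
  [/\ (exists! u, is_minimizer F u),
      (exists! p, is_maximizer G p),
      (forall u p, (is_minimizer F u /\ is_maximizer G p) <->
          [/\ interior (edom H) p,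
              x = u + t *: grad H p &
              (J u + lf_conj J p - (dotp p u)%:E = 0)%E]) &
      (forall u p, is_minimizer F u -> is_maximizer G p -> F u = G p)].
Proof.
move=> GJ GH cJ LH t0 [a [b [Ja [bint xab]]]].
exact: (primal_dual_optimality GJ GH cJ LH t0 Ja bint xab).
Qed.
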